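(* In the setting of the multi-dimensional system $\frac{d\boldsymbol{x}}{dt}=\mathbf{A}\boldsymbol{x}+\mathbf{B}_p\boldsymbol{p}+\mathbf{B}_d\boldsymbol{d}$ on $\mathcal{T}=[0,t_f]$ (with $\mathbf{A}$ having non-positive diagonal and non-negative off-diagonal entries, $\mathbf{B}_p\ge0$ entrywise, given $\boldsymbol{d}$ and $\boldsymbol{x}_0$, power bounds $\boldsymbol{0}\le\boldsymbol{p}_{\min}\le\boldsymbol{p}_{\max}$, state bounds $\boldsymbol{x}_{\min}\le\boldsymbol{x}_{\max}$), let $\boldsymbol{\alpha}(t),\boldsymbol{\beta}(t)$ and $\boldsymbol{b}_\pm(t)$ be defined as follows: $\alpha_{i,j}(t)=\max_{0\le\tau\le t}(e^{\mathbf{A}(t-\tau)}\mathbf{B}_p)_{i,j}$, $\beta_{i,j}(t)=\min_{0\le\tau\le t}(e^{\mathbf{A}(t-\tau)}\mathbf{B}_p)_{i,j}$, and $\boldsymbol{b}_\pm(t)=\int_0^t e^{\mathbf{A}(t-\tau)}\mathbf{B}_p\boldsymbol{p}_\pm(\tau)\,d\tau$, where $\boldsymbol{p}_\pm$ are feasible power trajectories (satisfying the power bounds and, with the same $\boldsymbol{x}_0,\boldsymbol{d}$, the state bounds for all $t$). For each $t\in\mathcal{T}$ let $\big(\mathbf{E}^{\mathrm{TI,d}}_{\mathrm{up}}(t),\mathbf{E}^{\mathrm{TI,d}}_{\mathrm{down}}(t)\big)\in\mathbb{R}^{N_p}\times\mathbb{R}^{N_p}$ be an optimal solution (assumed to exist)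 of $$\max_{\mathbf{E}_+,\mathbf{E}_-}\ \sum_{i=1}^{N_p}\ln(\mathrm{E}_{+,i}-\mathrm{E}_{-,i})\quad\text{s.t.}\quad \boldsymbol{\alpha}(t)\mathbf{E}_+\le\boldsymbol{b}_+(t),\ \ \boldsymbol{\beta}(t)\mathbf{E}_-\ge\boldsymbol{b}_-(t),\ \ \mathbf{E}_+\ge\mathbf{E}_-.$$ If a power trajectory $\boldsymbol{p}_a$ satisfies $\boldsymbol{p}_{\min}\le\boldsymbol{p}_a(t)\le\boldsymbol{p}_{\max}$ and, for every input index $i$ and all $t\in\mathcal{T}$, $$\mathrm{E}^{\mathrm{TI,d}}_{\mathrm{down},i}(t)\le\int_0^t p_{a,i}(\tau)\,d\tau\le\mathrm{E}^{\mathrm{TI,d}}_{\mathrm{up},i}(t),$$ then the resulting state $\boldsymbol{x}_a$ (same $\boldsymbol{x}_0$, $\boldsymbol{d}$) satisfies $\boldsymbol{x}_{\min}\le\boldsymbol{x}_a(t)\le\boldsymbol{x}_{\max}$ for all $t\in\mathcal{T}$.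
   Context: Vector inequalities and integrals are componentwise. The optimization problem describes the largest (in volume) axis-aligned box inscribed in the polytope $\{\mathbf{E}:\boldsymbol{\alpha}(t)\mathbf{E}\le\boldsymbol{b}_+(t),\ \boldsymbol{\beta}(t)\mathbf{E}\ge\boldsymbol{b}_-(t)\}$. States are given by $\boldsymbol{x}(t)=e^{\mathbf{A}t}\boldsymbol{x}_0+\int_0^t e^{\mathbf{A}(t-\tau)}(\mathbf{B}_d\boldsymbol{d}(\tau)+\mathbf{B}_p\boldsymbol{p}(\tau))\,d\tau$. *)

From HB Require Import structures.
From mathcomp Require Import all_boot all_order all_algebra.
From mathcomp Require Import all_classical all_reals all_analysis.
Set Implicit Arguments. Unset Strict Implicit. Unset Printing Implicit Defensive.
Import Order.TTheory GRing.Theory Num.Theory.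
Import numFieldNormedType.Exports.
Local Open Scope classical_set_scope.
Local Open Scope ring_scope.

Section Defs.
Variable R : realType.

Definition expm (n : nat) (A : 'M[R]_n) (s : R) : 'M[R]_n :=
  \matrix_(i, j) limn (fun N => \sum_(k < N) ((s ^+ k / (k`!)%:R) *: A ^+ k) i j).

Definition leb := (@lebesgue_measure R).

Definition state (Nx Np Nd : nat) (A : 'M[R]_Nx) (Bp : 'M[R]_(Nx, Np))
  (Bd : 'M[R]_(Nx, Nd)) (x0 : 'cV[R]_Nx) (d : R -> 'cV[R]_Nd)
  (p : R -> 'cV[R]_Np) (t : R) : 'cV[R]_Nx :=
  expm A t *m x0 +
  \col_i (\int[leb]_(tau in `[0, t]%classic)
            ((expm A (t - tau) *m (Bd *m d tau + Bp *m p tau)) i 0)).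

Definition vle (m n : nat) (u v : 'M[R]_(m, n)) : Prop := forall i j, u i j <= v i j.

Definition power_ok (Np : nat) (tf : R) (pmin pmax : 'cV[R]_Np)
  (p : R -> 'cV[R]_Np) : Prop :=
  forall t, 0 <= t <= tf -> vle pmin (p t) /\ vle (p t) pmax.

Definition feasible (Nx Np Nd : nat) (A : 'M[R]_Nx) (Bp : 'M[R]_(Nx, Np))
  (Bd : 'M[R]_(Nx, Nd)) (x0 : 'cV[R]_Nx) (d : R -> 'cV[R]_Nd) (tf : R)
  (pmin pmax : 'cV[R]_Np) (xmin xmax : 'cV[R]_Nx) (p : R -> 'cV[R]_Np) : Prop :=
  (forall i, measurable_fun setT (fun t => p t i 0)) /\
  power_ok tf pmin pmax p /\
  forall t, 0 <= t <= tf ->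
    vle xmin (state A Bp Bd x0 d p t) /\ vle (state A Bp Bd x0 d p t) xmax.

(* alpha_{ij}(t) = max_{0<=tau<=t} (e^{A(t-tau)} Bp)_{ij}  (attained: continuity) *)
Definition alpha (Nx Np : nat) (A : 'M[R]_Nx) (Bp : 'M[R]_(Nx, Np)) (t : R)
  : 'M[R]_(Nx, Np) :=
  \matrix_(i, j) sup [set (expm A (t - tau) *m Bp) i j | tau in `[0, t]%classic].

Definition beta (Nx Np : nat) (A : 'M[R]_Nx) (Bp : 'M[R]_(Nx, Np)) (t : R)
  : 'M[R]_(Nx, Np) :=
  \matrix_(i, j) inf [set (expm A (t - tau) *m Bp) i j | tau in `[0, t]%classic].

Definition bvec (Nx Np : nat) (A : 'M[R]_Nx) (Bp : 'M[R]_(Nx, Np))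
  (p : R -> 'cV[R]_Np) (t : R) : 'cV[R]_Nx :=
  \col_i (\int[leb]_(tau in `[0, t]%classic) ((expm A (t - tau) *m Bp *m p tau) i 0)).

Definition objective (Np : nat) (Ep Em : 'cV[R]_Np) : \bar R :=
  if [forall i, Em i 0 < Ep i 0] then (\sum_i ln (Ep i 0 - Em i 0))%:E else -oo%E.

Definition opt_feasible (Nx Np : nat) (al be : 'M[R]_(Nx, Np)) (bp bm : 'cV[R]_Nx)
  (Ep Em : 'cV[R]_Np) : Prop :=
  vle (al *m Ep) bp /\ vle bm (be *m Em) /\ vle Em Ep.

Definition optimal (Nx Np : nat) (al be : 'M[R]_(Nx, Np)) (bp bm : 'cV[R]_Nx)
  (Ep Em : 'cV[R]_Np) : Prop :=
  opt_feasible al be bp bm Ep Em /\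
  forall Ep' Em', opt_feasible al be bp bm Ep' Em' ->
    (objective Ep' Em' <= objective Ep Em)%E.

End Defs.

(* The state depends on the power trajectory p only through
   b_p(t) = int_0^t M(t,tau) p(tau) dtau, with kernel M(t,tau) = e^{A(t-tau)} Bp and
   beta(t) <= M(t,tau) <= alpha(t) for tau in [0,t].  Since A is Metzler, e^{As} >= 0
   for s >= 0 (adding cI to A only multiplies e^{As} by e^{cs} > 0), so M, alpha and
   beta are nonnegative.  For p_a >= 0 whose cumulative energy lies in the box,
     b_-(t) <= beta E_down <= beta int_0^t p_a <= b_a(t)
            <= alpha int_0^t p_a <= alpha E_up <= b_+(t),
   the outer inequalities being the box constraints.  Hence x_-(t) <= x_a(t) <= x_+(t),
   and the feasible trajectories p_- and p_+ satisfy the state bounds. *)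
From HB Require Import structures.
From mathcomp Require Import all_boot all_order all_algebra.
From mathcomp Require Import all_classical all_reals all_analysis.
From mathcomp Require Import measurable_realfun ring.
Import Order.TTheory GRing.Theory Num.Theory.
Import numFieldNormedType.Exports.
Local Open Scope classical_set_scope.
Local Open Scope ring_scope.
Set Implicit Arguments. Unset Strict Implicit. Unset Printing Implicit Defensive.

Section CauchyProduct.
Variable R : realType.
Implicit Types (a b : nat -> R) (la lb : R).

Lemma sum_convolution a b N :
  \sum_(k < N) \sum_(i < k.+1) a i * b (k - i)%N =
  \sum_(i < N) a i * \sum_(l < N - i) b l.
Proof.
elim: N => [|N IH]; first by rewrite !big_ord0.
rewrite big_ord_recr /= IH [RHS]big_ord_recr /= subSnn big_ord1.
rewrite big_ord_recr /= subnn addrA; congr (_ + _).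
rewrite -big_split /=; apply: eq_bigr => i _.
by rewrite subSn 1?ltnW // big_ord_recr /= mulrDr.
Qed.

Lemma norm_partial_sumB_le b m N : (m <= N)%N ->
  `|\sum_(l < N) b l - \sum_(l < m) b l| <=
  \sum_(l < N) `|b l| - \sum_(l < m) `|b l|.
Proof.
move=> /subnKC <-; elim: (N - m)%N => [|k IH]; first by rewrite addn0 !subrr normr0.
rewrite addnS !big_ord_recr /= addrAC [X in _ <= X]addrAC.
by apply: le_trans (ler_normD _ _) _; rewrite lerD2r.
Qed.

Lemma partial_sum_norm_le b m N : (m <= N)%N ->
  \sum_(l < m) `|b l| <= \sum_(l < N) `|b l|.
Proof.
move=> mN; rewrite -subr_ge0.
exact: le_trans (normr_ge0 _) (norm_partial_sumB_le b mN).
Qed.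

(* For i < N/2 the tail b_(N-i) + ... + b_(N-1) lies beyond N/2; for the other i
   it is bounded by the whole absolute sum. *)
Lemma norm_convolution_defect_le a b N :
  `|\sum_(i < N) a i * (\sum_(l < N) b l - \sum_(l < N - i) b l)| <=
  (\sum_(i < N) `|a i|) * (\sum_(l < N) `|b l|) -
  (\sum_(i < N./2) `|a i|) * (\sum_(l < N./2) `|b l|).
Proof.
apply: le_trans (ler_norm_sum _ _ _) _.
apply: (@le_trans _ _ (\sum_(i < N) `|a i| *
                       (\sum_(l < N) `|b l| - \sum_(l < N - i) `|b l|))).
  apply: ler_sum => i _; rewrite normrM ler_wpM2l //.
  by apply: norm_partial_sumB_le; rewrite leq_subr.
under eq_bigr do rewrite mulrBr.
rewrite sumrB -mulr_suml lerD2l lerN2.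
have halfN : (N./2 <= N)%N by rewrite -{2}(odd_double_half N) -addnn addnA leq_addl.
rewrite mulr_suml (big_ord_widen _ (fun i => `|a i| * \sum_(l < N./2) `|b l|) halfN).
rewrite big_mkcond /=; apply: ler_sum => i _.
case: ifP => hi; last by rewrite mulr_ge0 // sumr_ge0.
rewrite ler_wpM2l //; apply: partial_sum_norm_le.
rewrite leq_subRL; last exact: ltnW (leq_trans hi halfN).
rewrite -{3}(odd_double_half N) -addnn addnA leq_add2r.
exact: leq_trans (ltnW hi) (leq_addl _ _).
Qed.

Lemma cvg_half_oo : (fun N => N./2) @ \oo --> \oo.
Proof.
move=> P [M _ PM]; exists M.*2 => // n /= Mn; apply: PM => /=.
by rewrite -(half_double M) half_leq.
Qed.

Lemma cvg_cauchy_product a b la lb :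
  (fun N => \sum_(i < N) a i) @ \oo --> la ->
  (fun N => \sum_(i < N) b i) @ \oo --> lb ->
  cvgn (fun N => \sum_(i < N) `|a i|) ->
  cvgn (fun N => \sum_(i < N) `|b i|) ->
  (fun N => \sum_(k < N) \sum_(i < k.+1) a i * b (k - i)%N) @ \oo --> la * lb.
Proof.
move=> ca cb cna cnb.
pose SB N := \sum_(l < N) b l.
pose HA N := \sum_(i < N) `|a i|.
pose HB N := \sum_(l < N) `|b l|.
pose D N := \sum_(i < N) a i * (SB N - SB (N - i)%N).
pose g N := HA N * HB N - HA N./2 * HB N./2.
have -> : (fun N => \sum_(k < N) \sum_(i < k.+1) a i * b (k - i)%N) =
          (fun N => (\sum_(i < N) a i) * SB N - D N).
  apply/funext => N; rewrite sum_convolution /D mulr_suml -sumrB.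
  by apply: eq_bigr => i _; rewrite mulrBr opprB addrC subrK.
rewrite -[X in _ --> X]subr0; apply: cvgB; first exact: cvgM.
have g0 : g @ \oo --> 0.
  rewrite -(subrr (limn HA * limn HB)).
  by apply: cvgB; apply: cvgM => //; apply: cvg_comp cvg_half_oo _.
apply: (@squeeze_cvgr _ _ _ _ (- g) g); last exact: g0.
- by near=> N; rewrite -ler_norml norm_convolution_defect_le.
- by rewrite -oppr0; apply: cvgN.
Unshelve. all: by end_near.
Qed.

End CauchyProduct.

Lemma exists_mx_entry_bound (R : realType) m n (C : 'M[R]_(m, n)) :
  exists c, 0 <= c /\ forall i j, `|C i j| <= c.
Proof.
exists (\sum_i \sum_j `|C i j|); split; first by do 2 (apply: sumr_ge0 => ? _).
move=> i j; apply: (@le_trans _ _ (\sum_j `|C i j|)).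
  by rewrite (bigD1 j) //= lerDl sumr_ge0.
by rewrite (bigD1 i) //= lerDl sumr_ge0 // => k _; apply: sumr_ge0.
Qed.

Lemma seriesE (R : realType) (u : nat -> R) : series u = (fun N => \sum_(k < N) u k).
Proof. by apply/funext => N; rewrite /series /= big_mkord. Qed.

Lemma exp_coeff_partial_sum_le (R : realType) (x : R) N : 0 <= x ->
  \sum_(k < N) exp_coeff x k <= expR x.
Proof.
move=> x0.
have incr : nondecreasing_seq (series (exp_coeff x)).
  by apply: nondecreasing_series => k _ _; apply: exp_coeff_ge0.
apply: le_trans (nondecreasing_cvgn_le incr (is_cvg_series_exp_coeff x) N).
by rewrite seriesE.
Qed.

Section MatrixExponential.
Variables (R : realType) (n : nat).
Implicit Types (A : 'M[R]_n) (s c m : R).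

Lemma expmE A s i j :
  expm A s i j = limn (fun N => \sum_(k < N) s ^+ k / (k`!)%:R * (A ^+ k) i j).
Proof.
rewrite /expm mxE; do 3 f_equal; apply/funext => N.
by apply: eq_bigr => k _; rewrite mxE.
Qed.

Lemma norm_mx_expn_le A m : 0 <= m -> (forall i j, `|A i j| <= m) ->
  forall k i j, `|(A ^+ k) i j| <= (n%:R * m) ^+ k.
Proof.
move=> m0 Am; elim=> [|k IH] i j.
  by rewrite !expr0 mxE; case: (i == j); rewrite ?normr1 ?normr0.
rewrite exprSr -mulmxE mxE; apply: le_trans (ler_norm_sum _ _ _) _.
apply: (@le_trans _ _ (\sum_(l < n) (n%:R * m) ^+ k * m)).
  by apply: ler_sum => l _; rewrite normrM ler_pM.
by rewrite sumr_const card_ord exprSr -mulrnAr mulr_natl.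
Qed.

Lemma norm_expm_term_le A m s k i j : 0 <= m -> (forall i j, `|A i j| <= m) ->
  `|s ^+ k / (k`!)%:R * (A ^+ k) i j| <= exp_coeff (`|s| * (n%:R * m)) k.
Proof.
move=> m0 Am; rewrite exp_coeffE /= !normrM normrX exprMn normfV.
rewrite [`|(k`!)%:R|]ger0_norm // (mulrC (`|s| ^+ k)) -mulrA.
by rewrite !ler_wpM2l // norm_mx_expn_le.
Qed.

Lemma expm_cvg_norm A s i j :
  cvgn (fun N => \sum_(k < N) `|s ^+ k / (k`!)%:R * (A ^+ k) i j|).
Proof.
have [m [m0 Am]] := exists_mx_entry_bound A.
rewrite -(seriesE (fun k => `|s ^+ k / (k`!)%:R * (A ^+ k) i j|)).
apply: (@series_le_cvg _ _ (exp_coeff (`|s| * (n%:R * m)))) => //.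
- by move=> k; apply: exp_coeff_ge0; rewrite !mulr_ge0.
- by move=> k; apply: norm_expm_term_le.
- exact: is_cvg_series_exp_coeff.
Qed.

Lemma expm_cvg A s i j :
  cvgn (fun N => \sum_(k < N) s ^+ k / (k`!)%:R * (A ^+ k) i j).
Proof.
rewrite -(seriesE (fun k => s ^+ k / (k`!)%:R * (A ^+ k) i j)).
apply: normed_cvg.
rewrite (_ : [normed series _] =
             fun N => \sum_(k < N) `|s ^+ k / (k`!)%:R * (A ^+ k) i j|).
  exact: expm_cvg_norm.
by apply/funext => N; rewrite /normed_series_of /series /= big_mkord.
Qed.

Lemma norm_expm_le A m s i j : 0 <= m -> (forall i j, `|A i j| <= m) ->
  `|expm A s i j| <= expR (`|s| * (n%:R * m)).
Proof.
move=> m0 Am; rewrite expmE.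
have partial_le N : `|\sum_(k < N) s ^+ k / (k`!)%:R * (A ^+ k) i j| <=
                    expR (`|s| * (n%:R * m)).
  apply: le_trans (ler_norm_sum _ _ _) _.
  apply: le_trans (exp_coeff_partial_sum_le N _); last by rewrite !mulr_ge0.
  by apply: ler_sum => k _; apply: norm_expm_term_le.
rewrite ler_norml; apply/andP; split.
- apply: limr_ge; first exact: expm_cvg.
  by apply: nearW => N; have := partial_le N; rewrite ler_norml => /andP[].
- apply: limr_le; first exact: expm_cvg.
  by apply: nearW => N; have := partial_le N; rewrite ler_norml => /andP[].
Qed.

Lemma mx_expn_addr_scalar A c k i j :
  ((A + c%:M) ^+ k) i j = \sum_(l < k.+1) (c ^+ l * (A ^+ (k - l)) i j) *+ 'C(k, l).
Proof.
have Ac : GRing.comm A c%:M by rewrite /GRing.comm -!mulmxE scalar_mxC.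
have mulr_scalarX (X : 'M[R]_n) l : X * c%:M ^+ l = c ^+ l *: X.
  elim: l => [|l IH]; first by rewrite !expr0 mulr1 scale1r.
  by rewrite exprSr mulrA IH -mulmxE mul_mx_scalar scalerA exprSr mulrC.
rewrite exprDn_comm // summxE; apply: eq_bigr => l _.
by rewrite mulmxnE mulr_scalarX mxE.
Qed.

Lemma exp_term_binomial s c x k l : (l <= k)%N ->
  s ^+ k / (k`!)%:R * ((c ^+ l * x) *+ 'C(k, l)) =
  exp_coeff (c * s) l * (s ^+ (k - l) / ((k - l)`!)%:R * x).
Proof.
move=> lk; rewrite exp_coeffE /=.
have -> : (k`!)%:R = ('C(k, l))%:R * ((l`!)%:R * ((k - l)`!)%:R) :> R.
  by rewrite -!natrM bin_fact.
have -> : s ^+ k = s ^+ l * s ^+ (k - l) by rewrite -exprD subnKC.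
have lf0 : (l`!)%:R != 0 :> R by rewrite pnatr_eq0 -lt0n fact_gt0.
have klf0 : ((k - l)`!)%:R != 0 :> R by rewrite pnatr_eq0 -lt0n fact_gt0.
have bin0 : ('C(k, l))%:R != 0 :> R by rewrite pnatr_eq0 -lt0n bin_gt0.
rewrite -mulr_natr exprMn; field.
by rewrite lf0 klf0 bin0.
Qed.

(* The exponential series of A + cI is the Cauchy product of those of c and A. *)
Lemma expm_addr_scalar A c s i j :
  expm (A + c%:M) s i j = expR (c * s) * expm A s i j.
Proof.
rewrite [LHS]expmE; apply: cvg_lim => //.
have -> : (fun N => \sum_(k < N) s ^+ k / (k`!)%:R * ((A + c%:M) ^+ k) i j) =
          (fun N => \sum_(k < N) \sum_(l < k.+1) exp_coeff (c * s) l *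
             (s ^+ (k - l) / ((k - l)`!)%:R * (A ^+ (k - l)) i j)).
  apply/funext => N; apply: eq_bigr => k _.
  rewrite mx_expn_addr_scalar mulr_sumr; apply: eq_bigr => l _.
  by rewrite exp_term_binomial // -ltnS.
apply: (@cvg_cauchy_product _ _ (fun k => s ^+ k / (k`!)%:R * (A ^+ k) i j)).
- by have := is_cvg_series_exp_coeff (c * s); rewrite /expR seriesE.
- by rewrite expmE; apply: expm_cvg.
- have -> : (fun N => \sum_(k < N) `|exp_coeff (c * s) k|) =
            series (exp_coeff `|c * s|).
    apply/funext => N; rewrite seriesE /=; apply: eq_bigr => k _.
    by rewrite !exp_coeffE /= normrM normrX normfV [`|(k`!)%:R|]ger0_norm.
  exact: is_cvg_series_exp_coeff.
- exact: expm_cvg_norm.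
Qed.

Lemma expm_ge0 A s : 0 <= s -> (forall i j, 0 <= A i j) ->
  forall i j, 0 <= expm A s i j.
Proof.
move=> s0 A0 i j; rewrite expmE; apply: limr_ge; first exact: expm_cvg.
have Ak0 k : forall i j, 0 <= (A ^+ k) i j.
  elim: k => [|k IH] i1 j1; first by rewrite expr0 mxE ler0n.
  by rewrite exprSr -mulmxE mxE; apply: sumr_ge0 => l _; apply: mulr_ge0.
by apply: nearW => N; apply: sumr_ge0 => k _; rewrite !mulr_ge0 ?exprn_ge0.
Qed.

(* A Metzler matrix plus a large enough multiple of the identity is nonnegative. *)
Lemma expm_metzler_ge0 A s : 0 <= s -> (forall i j, i != j -> 0 <= A i j) ->
  forall i j, 0 <= expm A s i j.
Proof.
move=> s0 Aoff i j.
pose c := \sum_k `|A k k|.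
have diag_le k : - A k k <= c.
  apply: (@le_trans _ _ `|A k k|); first by rewrite -normrN ler_norm.
  by rewrite /c (bigD1 k) //= lerDl sumr_ge0.
have shifted0 k l : 0 <= (A + c%:M) k l.
  rewrite !mxE; have [->|kl] := eqVneq k l; last by rewrite mulr0n addr0 Aoff.
  by rewrite mulr1n -lerBlDl sub0r.
have := expm_ge0 s0 shifted0 i j.
by rewrite expm_addr_scalar pmulr_rge0 // expR_gt0.
Qed.

End MatrixExponential.

Section Integrals.
Variable R : realType.
Local Notation mu := (@lebesgue_measure R).

Lemma bounded_of_norm_le (f : R -> R) (D : set R) c :
  (forall x, D x -> `|f x| <= c) -> [bounded f x | x in D].
Proof.
move=> fc; exists c; split; first exact: num_real.
by move=> c' cc' x Dx; apply: le_trans (fc x Dx) (ltW cc').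
Qed.

Lemma integrable_bounded_itv (a b c : R) (f : R -> R) :
  measurable_fun (`[a, b]%classic : set R) f ->
  (forall x, (`[a, b]%classic : set R) x -> `|f x| <= c) ->
  mu.-integrable `[a, b] (EFin \o f).
Proof.
move=> mf fc.
have fin : (mu (`[a, b]%classic : set R) < +oo)%E.
  by rewrite lebesgue_measure_itv /=; case: ifP => _; rewrite ?ltry.
apply: measurable_bounded_integrable => //.
exact: bounded_of_norm_le fc.
Qed.

Lemma integrable_sumr (I : Type) (s : seq I) (f : I -> R -> R) (D : set R) :
  measurable D -> (forall l, mu.-integrable D (EFin \o f l)) ->
  mu.-integrable D (EFin \o (fun x => \sum_(l <- s) f l x)).
Proof.
move=> mD fi; rewrite (_ : EFin \o _ = fun x => \sum_(l <- s) (EFin \o f l) x)%E.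
  by apply: integrable_sum; first exact: mD.
by apply/funext => x /=; rewrite sumEFin.
Qed.

Lemma integrable_sum_mul (I : Type) (s : seq I) (h f : I -> R -> R) (D : set R) :
  measurable D ->
  (forall l, measurable_fun D (h l)) ->
  (forall l, exists c, forall x, D x -> `|h l x| <= c) ->
  (forall l, mu.-integrable D (EFin \o f l)) ->
  mu.-integrable D (EFin \o (fun x => \sum_(l <- s) h l x * f l x)).
Proof.
move=> mD mh bh fi; apply: integrable_sumr => // l.
rewrite (_ : EFin \o _ = (EFin \o h l) \* (EFin \o f l))%E; last first.
  by apply/funext => x /=; rewrite EFinM.
have [c hc] := bh l.
apply: integrableMr; [exact: mD | exact: mh | exact: bounded_of_norm_le hc | exact: fi].
Qed.

Lemma Rintegral_sum (I : Type) (s : seq I) (f : I -> R -> R) (D : set R) :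
  measurable D -> (forall l, mu.-integrable D (EFin \o f l)) ->
  \int[mu]_(x in D) (\sum_(l <- s) f l x) = \sum_(l <- s) \int[mu]_(x in D) f l x.
Proof.
move=> mD fi; elim: s => [|a s IH].
  under eq_Rintegral do rewrite big_nil.
  by rewrite big_nil Rintegral_cst ?mul0r //; exact: mD.
under eq_Rintegral do rewrite big_cons.
by rewrite big_cons -IH RintegralD //; apply: integrable_sumr.
Qed.

Lemma Rintegral_lincomb (I : Type) (s : seq I) (c : I -> R) (f : I -> R -> R)
    (D : set R) :
  measurable D -> (forall l, mu.-integrable D (EFin \o f l)) ->
  \int[mu]_(x in D) (\sum_(l <- s) c l * f l x) =
  \sum_(l <- s) c l * \int[mu]_(x in D) f l x.
Proof.
move=> mD fi; rewrite Rintegral_sum //.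
  by apply: eq_bigr => l _; rewrite RintegralZl //; apply: fi.
move=> l; rewrite (_ : EFin \o _ = fun x => (c l)%:E * (EFin \o f l) x)%E.
  exact: integrableZl.
by apply/funext => x /=; rewrite EFinM.
Qed.

End Integrals.

Section Kernel.
Variables (R : realType) (n m : nat) (A : 'M[R]_n) (C : 'M[R]_(n, m)).
Local Notation mu := (@lebesgue_measure R).

Lemma measurable_expm_shift (t : R) i j (D : set R) :
  measurable_fun D (fun tau => expm A (t - tau) i j).
Proof.
apply: measurable_fun_cvg => [N|x _]; last by rewrite expmE; apply: expm_cvg.
apply: measurable_sum => k; apply: measurable_funM => //.
by apply: measurable_funM => //; apply: measurable_funX; apply: measurable_funB.
Qed.

Lemma measurable_kernel (t : R) i l (D : set R) :
  measurable_fun D (fun tau => (expm A (t - tau) *m C) i l).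
Proof.
rewrite (_ : (fun tau => _) = fun tau => \sum_k expm A (t - tau) i k * C k l).
  by apply: measurable_sum => k; apply: measurable_funM => //; apply: measurable_expm_shift.
by apply/funext => tau; rewrite mxE.
Qed.

Lemma expm_shift_bounded (t : R) :
  exists c, forall tau i k, (`[0, t]%classic : set R) tau -> `|expm A (t - tau) i k| <= c.
Proof.
have [a [a0 Aa]] := exists_mx_entry_bound A.
exists (expR (t * (n%:R * a))) => tau i k; rewrite /= in_itv /= => /andP[tau0 taut].
apply: le_trans (norm_expm_le _ _ _ a0 Aa) _.
by rewrite ler_expR ler_wpM2r ?mulr_ge0 // ger0_norm ?subr_ge0 // lerBlDr lerDl.
Qed.

Lemma kernel_bounded (t : R) i l :
  exists c, forall tau, (`[0, t]%classic : set R) tau ->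
    `|(expm A (t - tau) *m C) i l| <= c.
Proof.
have [c Ec] := expm_shift_bounded t.
exists (\sum_k c * `|C k l|) => tau tau_t; rewrite mxE.
apply: le_trans (ler_norm_sum _ _ _) _; apply: ler_sum => k _.
by rewrite normrM ler_wpM2r // Ec.
Qed.

Lemma integrable_kernel_mul (q : R -> 'cV[R]_m) (t : R) i :
  (forall l, mu.-integrable `[0, t] (EFin \o (fun tau => q tau l 0))) ->
  mu.-integrable `[0, t] (EFin \o (fun tau => (expm A (t - tau) *m C *m q tau) i 0)).
Proof.
move=> qi; rewrite (_ : (fun tau => _) =
  fun tau => \sum_(l <- index_enum 'I_m) (expm A (t - tau) *m C) i l * q tau l 0).
  by apply: integrable_sum_mul => // l; [apply: measurable_kernel | apply: kernel_bounded].
by apply/funext => tau; rewrite mxE.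
Qed.

Lemma kernel_ge0 (t tau : R) i l :
  (forall i j, i != j -> 0 <= A i j) -> (forall k l, 0 <= C k l) ->
  (`[0, t]%classic : set R) tau -> 0 <= (expm A (t - tau) *m C) i l.
Proof.
move=> Aoff C0; rewrite /= in_itv /= => /andP[_ taut]; rewrite mxE.
apply: sumr_ge0 => k _; rewrite mulr_ge0 //.
by apply: expm_metzler_ge0; rewrite ?subr_ge0.
Qed.

End Kernel.

Section BoxBounds.
Variables (R : realType) (Nx Np : nat) (A : 'M[R]_Nx) (Bp : 'M[R]_(Nx, Np)).
Local Notation mu := (@lebesgue_measure R).

Definition energy (p : R -> 'cV[R]_Np) (t : R) : 'cV[R]_Np :=
  \col_j \int[mu]_(tau in `[0, t]) p tau j 0.

Lemma kernel_le_alpha (t tau : R) i j : (`[0, t]%classic : set R) tau ->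
  (expm A (t - tau) *m Bp) i j <= alpha A Bp t i j.
Proof.
move=> tau_t; rewrite [leRHS]mxE; have [c Kc] := kernel_bounded A Bp t i j.
apply: ub_le_sup; last by exists tau.
by exists c => _ [s s_t <-]; apply: le_trans (ler_norm _) (Kc _ s_t).
Qed.

Hypotheses (Aoff : forall i j, i != j -> 0 <= A i j) (Bp0 : forall i j, 0 <= Bp i j).

Lemma alpha_ge0 (t : R) i j : 0 <= t -> 0 <= alpha A Bp t i j.
Proof.
move=> t0; have t_t : (`[0, t]%classic : set R) 0 by rewrite /= in_itv /= lexx t0.
exact: le_trans (kernel_ge0 i j Aoff Bp0 t_t) (kernel_le_alpha i j t_t).
Qed.

Lemma beta_le_kernel (t tau : R) i j : (`[0, t]%classic : set R) tau ->
  beta A Bp t i j <= (expm A (t - tau) *m Bp) i j.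
Proof.
move=> tau_t; rewrite [leLHS]mxE; apply: ge_inf; last by exists tau.
by exists 0 => _ [s s_t <-]; apply: kernel_ge0.
Qed.

Lemma beta_ge0 (t : R) i j : 0 <= t -> 0 <= beta A Bp t i j.
Proof.
move=> t0; have t_t : (`[0, t]%classic : set R) 0 by rewrite /= in_itv /= lexx t0.
rewrite mxE; apply: lb_le_inf; first by exists ((expm A (t - 0) *m Bp) i j), 0.
by move=> _ [s s_t <-]; apply: kernel_ge0.
Qed.

Lemma mulmx_energyE (c : 'M[R]_(Nx, Np)) (p : R -> 'cV[R]_Np) (t : R) i :
  (forall j, mu.-integrable `[0, t] (EFin \o (fun tau => p tau j 0))) ->
  (c *m energy p t) i 0 =
  \int[mu]_(tau in `[0, t]) (\sum_(j <- index_enum 'I_Np) c i j * p tau j 0).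
Proof.
by move=> pi; rewrite mxE Rintegral_lincomb //; apply: eq_bigr => j _; rewrite mxE.
Qed.

Section Comparison.
Variables (p : R -> 'cV[R]_Np) (t : R) (c : 'M[R]_(Nx, Np)) (i : 'I_Nx).
Hypotheses (p_int : forall j, mu.-integrable `[0, t] (EFin \o (fun tau => p tau j 0)))
  (p0 : forall tau j, (`[0, t]%classic : set R) tau -> 0 <= p tau j 0).

Let weighted_integrable :
  mu.-integrable `[0, t] (EFin \o (fun tau => \sum_(j <- index_enum 'I_Np) c i j * p tau j 0)).
Proof. by apply: integrable_sum_mul => // j; exists `|c i j|. Qed.

Lemma bvec_le_mulmx_energy :
  (forall tau j, (`[0, t]%classic : set R) tau -> (expm A (t - tau) *m Bp) i j <= c i j) ->
  bvec A Bp p t i 0 <= (c *m energy p t) i 0.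
Proof.
move=> Kc; rewrite mulmx_energyE // mxE.
apply: le_Rintegral => //; first exact: integrable_kernel_mul.
by move=> tau tau_t; rewrite mxE; apply: ler_sum => j _; rewrite ler_wpM2r ?p0 ?Kc.
Qed.

Lemma mulmx_energy_le_bvec :
  (forall tau j, (`[0, t]%classic : set R) tau -> c i j <= (expm A (t - tau) *m Bp) i j) ->
  (c *m energy p t) i 0 <= bvec A Bp p t i 0.
Proof.
move=> cK; rewrite mulmx_energyE // [leRHS]mxE.
apply: le_Rintegral => //; first exact: integrable_kernel_mul.
by move=> tau tau_t; rewrite mxE; apply: ler_sum => j _; rewrite ler_wpM2r ?p0 ?cK.
Qed.

End Comparison.

End BoxBounds.

Lemma vle_mulmx2l (R : realType) m n k (M : 'M[R]_(m, n)) (u v : 'M[R]_(n, k)) :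
  (forall i j, 0 <= M i j) -> vle u v -> vle (M *m u) (M *m v).
Proof. by move=> M0 uv i j; rewrite !mxE; apply: ler_sum => l _; rewrite ler_wpM2l. Qed.

Section State.
Variables (R : realType) (Nx Np Nd : nat) (A : 'M[R]_Nx) (Bp : 'M[R]_(Nx, Np))
  (Bd : 'M[R]_(Nx, Nd)) (x0 : 'cV[R]_Nx) (d : R -> 'cV[R]_Nd) (t : R).
Local Notation mu := (@lebesgue_measure R).
Hypothesis d_int : forall k, mu.-integrable `[0, t] (EFin \o (fun tau => d tau k 0)).

Lemma stateE (p : R -> 'cV[R]_Np) i :
  (forall j, mu.-integrable `[0, t] (EFin \o (fun tau => p tau j 0))) ->
  state A Bp Bd x0 d p t i 0 =
  (expm A t *m x0) i 0 +
  \int[mu]_(tau in `[0, t]) (expm A (t - tau) *m Bd *m d tau) i 0 +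
  bvec A Bp p t i 0.
Proof.
move=> p_int; rewrite /state /bvec !mxE -addrA; congr (_ + _).
under eq_Rintegral do rewrite mulmxDr !mulmxA mxE.
by rewrite RintegralD //; exact: integrable_kernel_mul.
Qed.

Lemma ler_state (p q : R -> 'cV[R]_Np) i :
  (forall j, mu.-integrable `[0, t] (EFin \o (fun tau => p tau j 0))) ->
  (forall j, mu.-integrable `[0, t] (EFin \o (fun tau => q tau j 0))) ->
  (state A Bp Bd x0 d p t i 0 <= state A Bp Bd x0 d q t i 0) =
  (bvec A Bp p t i 0 <= bvec A Bp q t i 0).
Proof. by move=> p_int q_int; rewrite !stateE // lerD2l. Qed.

End State.

Section PowerBounds.
Variables (R : realType) (Np : nat) (tf t : R) (pmin pmax : 'cV[R]_Np).
Variable p : R -> 'cV[R]_Np.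
Hypotheses (t_tf : 0 <= t <= tf) (pmin0 : vle 0 pmin) (p_ok : power_ok tf pmin pmax p).

Lemma power_ok_bounds x j : (`[0, t]%classic : set R) x -> 0 <= p x j 0 <= pmax j 0.
Proof.
have /andP[t0 ttf] := t_tf; rewrite /= in_itv /= => /andP[x0 xt].
have x_tf : 0 <= x <= tf by rewrite x0 (le_trans xt ttf).
have [pmin_p p_pmax] := p_ok x_tf.
have := pmin0 j 0; rewrite mxE => pmin_ge0.
by rewrite (le_trans pmin_ge0 (pmin_p j 0)) p_pmax.
Qed.

Lemma power_ok_integrable :
  (forall j, measurable_fun setT (fun tau => p tau j 0)) ->
  forall j, (@lebesgue_measure R).-integrable `[0, t] (EFin \o (fun tau => p tau j 0)).
Proof.
move=> mp j; apply: (@integrable_bounded_itv _ _ _ (pmax j 0)).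
  exact: measurable_funS (mp j).
by move=> x x_t; have /andP[p0 p_le] := power_ok_bounds j x_t; rewrite ger0_norm.
Qed.

End PowerBounds.

Theorem theorem3 (R : realType) (Nx Np Nd : nat)
  (A : 'M[R]_Nx) (Bp : 'M[R]_(Nx, Np)) (Bd : 'M[R]_(Nx, Nd))
  (x0 : 'cV[R]_Nx) (d : R -> 'cV[R]_Nd) (tf : R)
  (pmin pmax : 'cV[R]_Np) (xmin xmax : 'cV[R]_Nx)
  (pplus pminus pa : R -> 'cV[R]_Np) (Eup Edown : R -> 'cV[R]_Np) :
  0 <= tf ->
  (forall i, A i i <= 0) ->
  (forall i j, i != j -> 0 <= A i j) ->
  (forall i j, 0 <= Bp i j) ->
  (forall k, (@lebesgue_measure R).-integrable `[0, tf] (fun t => (d t k 0)%:E)) ->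
  vle 0 pmin -> vle pmin pmax -> vle xmin xmax ->
  feasible A Bp Bd x0 d tf pmin pmax xmin xmax pplus ->
  feasible A Bp Bd x0 d tf pmin pmax xmin xmax pminus ->
  (forall t, 0 <= t <= tf ->
     optimal (alpha A Bp t) (beta A Bp t) (bvec A Bp pplus t) (bvec A Bp pminus t)
             (Eup t) (Edown t)) ->
  (forall i, measurable_fun setT (fun t => pa t i 0)) ->
  power_ok tf pmin pmax pa ->
  (forall i t, 0 <= t <= tf ->
     Edown t i 0 <= \int[lebesgue_measure]_(tau in `[0, t]) pa tau i 0 <= Eup t i 0) ->
  forall t, 0 <= t <= tf ->
    vle xmin (state A Bp Bd x0 d pa t) /\ vle (state A Bp Bd x0 d pa t) xmax.
Proof.
move=> _ _ Aoff Bp0 d_int pmin0 _ _ [m_plus [ok_plus x_plus]] [m_minus [ok_minus x_minus]]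
  opt m_pa ok_pa E_pa t t_tf.
have [[up_box [down_box _]] _] := opt t t_tf.
have /andP[t0 ttf] := t_tf.
have d_int_t k : (@lebesgue_measure R).-integrable `[0, t] (EFin \o (fun tau => d tau k 0)).
  apply: integrableS (d_int k) => // x; rewrite /= !in_itv /= => /andP[-> xt].
  exact: le_trans xt ttf.
have pa_int := power_ok_integrable t_tf pmin0 ok_pa m_pa.
have pa0 tau j (tau_t : (`[0, t]%classic : set R) tau) : 0 <= pa tau j 0.
  by have /andP[] := power_ok_bounds t_tf pmin0 ok_pa j tau_t.
have [down_E E_up] : vle (Edown t) (energy pa t) /\ vle (energy pa t) (Eup t).
  by split=> k l; rewrite mxE (ord1 l); case/andP: (E_pa k t t_tf).
split => i j; rewrite (ord1 j).
- apply: le_trans (proj1 (x_minus t t_tf) i 0) _.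
  rewrite ler_state //; last exact: power_ok_integrable t_tf pmin0 ok_minus m_minus.
  apply: le_trans (down_box i 0) _.
  apply: le_trans (mulmx_energy_le_bvec pa_int pa0 (fun tau k => beta_le_kernel Aoff Bp0 i k)).
  exact: vle_mulmx2l (fun k l => beta_ge0 Aoff Bp0 k l t0) down_E i 0.
- apply: le_trans _ (proj2 (x_plus t t_tf) i 0).
  rewrite ler_state //; last exact: power_ok_integrable t_tf pmin0 ok_plus m_plus.
  apply: le_trans _ (up_box i 0).
  apply: le_trans (bvec_le_mulmx_energy pa_int pa0 (fun tau k => kernel_le_alpha A Bp i k)) _.
  exact: vle_mulmx2l (fun k l => alpha_ge0 Aoff Bp0 k l t0) E_up i 0.
Qed.
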